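(* There exist no binary orthogonal arrays of parameters $(n,M,\tau)=(10,112,4)$ or $(11,112,4)$, i.e. of length $10$ or $11$, cardinality $112=7\cdot 2^4$ and strength $4$.
   Context: A binary orthogonal array of parameters $(n,M,\tau)$ is the multiset of rows of an $M\times n$ binary matrix such that every $M\times\tau$ submatrix contains each ordered $\tau$-tuple of $\{0,1\}^\tau$ exactly $M/2^\tau$ times as rows. *)

From mathcomp Require Import all_boot.
Set Implicit Arguments. Unset Strict Implicit. Unset Printing Implicit Defensive.

Definition bword (n : nat) := {ffun 'I_n -> bool}.

(* A binary orthogonal array with parameters (n, M, tau): a multiset of M rows
   (given as a sequence of length M of binary words of length n) such that for
   every choice of tau distinct columns c_0,...,c_{tau-1} (an injective map
   c : 'I_tau -> 'I_n, i.e. every M x tau submatrix, with columns in any order),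
   each tau-tuple v in {0,1}^tau appears exactly M / 2^tau times as a row of
   that submatrix.  We also require that 2^tau divides M, as implicit in the
   definition ("exactly M/2^tau times"). *)
Definition is_binary_OA (n M tau : nat) (C : seq (bword n)) : Prop :=
  size C = M /\ (2 ^ tau %| M) /\
  forall (c : 'I_tau -> 'I_n), injective c ->
  forall (v : {ffun 'I_tau -> bool}),
    count (fun x : bword n => [forall i, x (c i) == v i]) C = M %/ 2 ^ tau.
Arguments is_binary_OA : clear implicits.

From mathcomp Require Import all_boot all_order all_algebra zify ring.
Import Order.TTheory GRing.Theory Num.Theory.
Set Implicit Arguments. Unset Strict Implicit. Unset Printing Implicit Defensive.

(* Strength 4 fixes the first five binomial moments of the distance profile
   around any word: for rows y of an OA(10, 112, 4) and a polynomial P of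
   degree at most 4, sum_y P(d(x, y)) depends only on the coefficients of P.
   A Delsarte polynomial that is nonnegative on 0..10, equals 504 at 0,
   vanishes exactly at 4 and 7 and has moment sum 1008 shows that every word
   occurs at most twice and that doubled words are at distances 0, 4 or 7 from
   all rows; distance 4 is impossible, and parity allows at most two doubled
   words, so sum_x mult(x)^2 <= 116.  On the other hand, (-1)^w agrees modulo
   32 with the degree-4 truncation of (1 - 2)^w, so the same moments make the
   Walsh coefficient of the multiplicity function an odd multiple of 16 on
   every T with 5 <= |T| <= 8; together with the coefficient 112 at T = set0,
   Parseval gives 1024 * sum_x mult(x)^2 >= 112^2 + 256 * 627 = 1024 * 169.
   Length 11 reduces to length 10 by deleting a coordinate. *)

Definition agree n (J : {set 'I_n}) (p : bword n) : pred (bword n) :=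
  fun y => [forall i in J, y i == p i].

Lemma agree_setU1 n (J : {set 'I_n}) p i y :
  agree (i |: J) p y = (y i == p i) && agree J p y.
Proof.
apply/forallP/andP => [agree_y | [yi /forallP agree_y] k].
  split; first by have /implyP := agree_y i; apply; rewrite setU11.
  by apply/forallP => k; apply/implyP => kJ; have /implyP := agree_y k; apply; rewrite setU1r.
by rewrite in_setU1; case: eqP => [-> //|_]; exact: agree_y.
Qed.

Definition flip_at n (i : 'I_n) (p : bword n) : bword n :=
  [ffun k => if k == i then ~~ p i else p k].

Lemma agree_flip_at n (J : {set 'I_n}) p i : i \notin J ->
  agree (i |: J) (flip_at i p) =1 predI (fun y : bword n => y i != p i) (agree J p).
Proof.
move=> iJ y; rewrite agree_setU1 /= ffunE eqxx; congr andb.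
  by case: (y i) (p i) => [] [].
apply: eq_forallb => k; case: (boolP (k \in J)) => //= kJ.
by rewrite ffunE; case: (eqVneq k i) => // eq_ki; rewrite -eq_ki kJ in iJ.
Qed.

Lemma count_agree_split n (s : seq (bword n)) (J : {set 'I_n}) p i : i \notin J ->
  count (agree J p) s =
  count (agree (i |: J) p) s + count (agree (i |: J) (flip_at i p)) s.
Proof.
move=> iJ; rewrite (eq_count (agree_flip_at p iJ)) -size_filter.
rewrite -(count_predC (fun y : bword n => y i == p i) (filter (agree J p) s)).
by rewrite !count_filter; congr (_ + _); apply: eq_count => y; rewrite agree_setU1.
Qed.

Definition dist_on n (T : {set 'I_n}) (x y : bword n) : nat :=
  #|T :&: [set i | x i != y i]|.

Lemma bin_sum_subsets (T : finType) (A : {set T}) j :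
  'C(#|A|, j) = \sum_(B : {set T} | #|B| == j) (B \subset A : nat).
Proof.
rewrite -cards_draws -sum1_card big_mkcond [RHS]big_mkcond /=.
by apply: eq_bigr => B _; rewrite inE; case: (B \subset A); case: (#|B| == j).
Qed.

Definition binpoly (q : seq int) (w : nat) : int :=
  (\sum_(j < size q) q`_j * 'C(w, j)%:R)%R.

Section OrthogonalArray.

Variables (n M tau : nat) (C : seq (bword n)).
Hypothesis OA_C : is_binary_OA n M tau C.
Hypothesis tau_le_n : tau <= n.

Local Notation lambda := (M %/ 2 ^ tau).

Lemma count_agree_strength (J : {set 'I_n}) p :
  #|J| = tau -> count (agree J p) C = lambda.
Proof.
move=> cardJ; case: OA_C => _ [_ OA_cols].
pose c (k : 'I_tau) : 'I_n := enum_val (cast_ord (esym cardJ) k).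
have inj_c : injective c by move=> k1 k2 /enum_val_inj /cast_ord_inj.
rewrite -(OA_cols c inj_c [ffun k => p (c k)]); apply: eq_count => y.
apply/forallP/forallP => /= agree_y.
- by move=> k; rewrite ffunE; have /implyP := agree_y (c k); apply; apply: enum_valP.
- move=> i; apply/implyP => iJ; have := agree_y (cast_ord cardJ (enum_rank_in iJ i)).
  by rewrite ffunE /c cast_ordK enum_rankK_in.
Qed.

Lemma count_agree (J : {set 'I_n}) p :
  #|J| <= tau -> count (agree J p) C = lambda * 2 ^ (tau - #|J|).
Proof.
move eq_k: (tau - #|J|) => k; elim: k J p eq_k => [|k IHk] J p eq_k J_le.
  by rewrite count_agree_strength ?muln1 //; apply/eqP; rewrite eqn_leq J_le -subn_eq0 eq_k.
have J_lt_n : #|J| < n by rewrite (leq_trans _ tau_le_n) // -subn_gt0 eq_k.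
have /set0Pn [i] : ~: J != set0 by rewrite -card_gt0 cardsCs setCK card_ord subn_gt0.
rewrite in_setC => iJ.
have eq_k' : tau - #|i |: J| = k by rewrite cardsU1 iJ addnC subnDA eq_k subn1.
have J_le' : #|i |: J| <= tau by rewrite cardsU1 iJ add1n -subn_gt0 eq_k.
by rewrite (count_agree_split _ _ iJ) !IHk // expnS; lia.
Qed.

Lemma sum_bin_dist_on (T : {set 'I_n}) x j : j <= tau ->
  \sum_(y <- C) 'C(dist_on T x y, j) = 'C(#|T|, j) * (lambda * 2 ^ (tau - j)).
Proof.
move=> j_le; under eq_bigr do rewrite bin_sum_subsets.
rewrite exchange_big bin_sum_subsets big_distrl /=.
apply: eq_bigr => B /eqP cardB.
pose x' : bword n := [ffun i => ~~ x i].
have agree_x' (y : bword n) : (B \subset [set i | x i != y i]) = agree B x' y.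
  apply/subsetP/forallP => [sub i | agr i iB].
    by apply/implyP => /sub; rewrite inE ffunE; case: (x i) (y i) => [] [].
  by have /implyP/(_ iB) := agr i; rewrite inE ffunE; case: (x i) (y i) => [] [].
rewrite -cardB -(count_agree x') ?cardB // -sum1_count big_distrr [RHS]big_mkcond /=.
by apply: eq_bigr => y _; rewrite subsetI agree_x'; case: (B \subset T); case: agree.
Qed.

Lemma sum_binpoly_dist_on q (T : {set 'I_n}) x : size q <= tau.+1 ->
  (\sum_(y <- C) binpoly q (dist_on T x y) =
   \sum_(j < size q) q`_j * ('C(#|T|, j) * (lambda * 2 ^ (tau - j)))%:R)%R.
Proof.
move=> size_q; rewrite exchange_big; apply: eq_bigr => j _.
by rewrite -mulr_sumr -natr_sum sum_bin_dist_on // -ltnS (leq_trans _ size_q).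
Qed.

End OrthogonalArray.

Definition puncture n (x : bword n.+1) : bword n := [ffun i => x (widen_ord (leqnSn n) i)].

Lemma is_binary_OA_puncture n M tau (C : seq (bword n.+1)) :
  is_binary_OA n.+1 M tau C -> is_binary_OA n M tau (map (@puncture n) C).
Proof.
case=> size_C [dvd_M OA_cols]; split; first by rewrite size_map.
split=> // c inj_c v; rewrite count_map.
have inj_c' : injective (fun k => widen_ord (leqnSn n) (c k)).
  by move=> k1 k2 /(congr1 val) /= /val_inj /inj_c.
rewrite -(OA_cols _ inj_c' v); apply: eq_count => x /=.
by apply/forallP/forallP => x_v k; have := x_v k; rewrite ffunE.
Qed.

Local Open Scope ring_scope.

Lemma sum_count_mem (T : finType) (V : nmodType) (s : seq T) (F : T -> V) :
  \sum_(y <- s) F y = \sum_x F x *+ count_mem x s.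
Proof.
elim: s => [|y s IHs]; first by rewrite big_nil big1 // => x _; rewrite mulr0n.
rewrite big_cons IHs (bigD1 y) //= [in RHS](bigD1 y) //= eqxx mulrS -addrA.
by congr (_ + (_ + _)); apply: eq_bigr => x /negbTE xy; rewrite eq_sym xy.
Qed.

Lemma sum_set_card (V : nmodType) n (F : nat -> V) :
  \sum_(T : {set 'I_n}) F #|T| = \sum_(k < n.+1) F k *+ 'C(n, k).
Proof.
have cardT_lt (T : {set 'I_n}) : (#|T| < n.+1)%N.
  by rewrite ltnS -[n in (_ <= n)%N]card_ord max_card.
rewrite (partition_big (fun T => Ordinal (cardT_lt T)) xpredT) //=; apply: eq_bigr => k _.
rewrite (eq_bigr (fun _ => F k)) => [|T /eqP <-] //; rewrite sumr_const.
have := card_draws 'I_n k; rewrite card_ord => <-; congr (_ *+ _).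
by apply: eq_card => T; rewrite inE.
Qed.

Definition zero_word n : bword n := [ffun _ => false].

Definition walsh_char n (T : {set 'I_n}) (x : bword n) : int :=
  (-1) ^+ dist_on T (zero_word n) x.

Section Parseval.

Variable n : nat.
Implicit Types (T : {set 'I_n}) (x y : bword n).

Lemma card_set_ord : #|{set 'I_n}| = (2 ^ n)%N.
Proof. by rewrite -cardsT -powersetT card_powerset cardsT card_ord. Qed.

Lemma dist_on_setD1 T x y i : i \in T ->
  dist_on T x y = ((x i != y i) + dist_on (T :\ i) x y)%N.
Proof. by move=> iT; rewrite /dist_on (cardsD1 i) !inE iT /= setIDAC. Qed.

Lemma walsh_char_mul_setD1 T x y i : i \in T -> x i != y i ->
  walsh_char (T :\ i) x * walsh_char (T :\ i) y = - (walsh_char T x * walsh_char T y).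
Proof.
move=> iT xy_i; rewrite /walsh_char -!exprD (dist_on_setD1 _ x iT) (dist_on_setD1 _ y iT).
rewrite !ffunE addnACA exprD; have -> : ((false != x i) + (false != y i))%N = 1%N.
  by case: (x i) (y i) xy_i => [] [].
by rewrite exprS mulN1r opprK exprD.
Qed.

Lemma sum_walsh_char_mul x y :
  \sum_T walsh_char T x * walsh_char T y = ((2 ^ n)%N * (x == y)%N)%:R.
Proof.
have [<-|xy] := eqVneq x y.
  under eq_bigr do rewrite -expr2 /walsh_char sqrr_sign.
  by rewrite sumr_const card_set_ord muln1.
have [i xy_i] : exists i, x i != y i.
  apply/existsP; apply: contraNT xy => /existsPn xy_eq.
  by apply/eqP/ffunP => i; apply/eqP/negbNE.
pose flip T := if i \in T then T :\ i else i |: T.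
have flipK : involutive flip.
  move=> T; rewrite /flip; case: (boolP (i \in T)) => iT.
    by rewrite setD11 setD1K.
  by rewrite setU11 setU1K.
have flip_neg T :
    walsh_char (flip T) x * walsh_char (flip T) y = - (walsh_char T x * walsh_char T y).
  rewrite /flip; case: (boolP (i \in T)) => iT; first exact: walsh_char_mul_setD1.
  by rewrite -[in RHS](setU1K iT) walsh_char_mul_setD1 ?setU11 ?opprK.
set S := \sum_T _; have : S = - S.
  rewrite {1}/S (reindex_inj (inv_inj flipK)) -sumrN.
  by apply: eq_bigr => T _; exact: flip_neg.
by rewrite muln0 => /eqP; rewrite -addr_eq0 -mulr2n mulrn_eq0 /= => /eqP.
Qed.

Lemma parseval (f : bword n -> int) :
  \sum_T (\sum_x f x * walsh_char T x) ^+ 2 = (2 ^ n)%:R * \sum_x f x ^+ 2.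
Proof.
have expand T : (\sum_x f x * walsh_char T x) ^+ 2 =
    \sum_x \sum_y f x * f y * (walsh_char T x * walsh_char T y).
  rewrite expr2 mulr_suml; apply: eq_bigr => x _.
  by rewrite mulr_sumr; apply: eq_bigr => y _; rewrite mulrACA.
rewrite (eq_bigr _ (fun T _ => expand T)) exchange_big mulr_sumr.
apply: eq_bigr => x _ /=; rewrite exchange_big /= (bigD1 x) //= [X in _ + X]big1.
- by rewrite -mulr_sumr sum_walsh_char_mul eqxx muln1 addr0 mulrC expr2.
- move=> y yx; rewrite -mulr_sumr sum_walsh_char_mul.
  by rewrite eq_sym (negbTE yx) muln0 mulr0.
Qed.

End Parseval.

Definition sign_poly : seq int := [:: 1; -2; 4; -8; 16].

(* [sign_poly] truncates the binomial expansion of [(1 - 2) ^ w] after the 2^4 term. *)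
Lemma sign_binpoly_mod32 w : (32 %| (-1) ^+ w - binpoly sign_poly w)%Z.
Proof.
have expand k : binpoly sign_poly k =
    1 - 2 * 'C(k, 1)%:R + 4 * 'C(k, 2)%:R - 8 * 'C(k, 3)%:R + 16 * 'C(k, 4)%:R.
  by rewrite /binpoly !big_ord_recl big_ord0 /= bin0 mulr1 addr0 !mulNr !addrA.
elim: w => [|w IHw]; first by rewrite expand.
have -> : (-1) ^+ w.+1 - binpoly sign_poly w.+1 =
    - ((-1) ^+ w - binpoly sign_poly w) - 32 * 'C(w, 4)%:R.
  by rewrite !expand exprS !binS !natrD bin0 mulN1r; ring.
by rewrite rpredB ?rpredN ?dvdz_mulr.
Qed.

Definition hdist n (x y : bword n) : nat := dist_on setT x y.

Section HammingDistance.

Variable n : nat.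
Implicit Types x y z : bword n.

Lemma hdist_sum x y : hdist x y = (\sum_i (x i != y i))%N.
Proof.
rewrite /hdist /dist_on setTI -sum1_card big_mkcond.
by apply: eq_bigr => i _; rewrite inE.
Qed.

Lemma hdist_le x y : (hdist x y <= n)%N.
Proof. by rewrite -[n in (_ <= n)%N]card_ord max_card. Qed.

Lemma hdist_eq0 x y : (hdist x y == 0%N) = (x == y).
Proof.
rewrite hdist_sum sum_nat_eq0; apply/forallP/eqP => [xy | -> i]; last by rewrite eqxx.
by apply/ffunP => i; apply/eqP/negbNE; have := xy i; case: (x i != y i).
Qed.

Lemma hdistxx x : hdist x x = 0%N.
Proof. by apply/eqP; rewrite hdist_eq0. Qed.

Lemma hdistC x y : hdist x y = hdist y x.
Proof. by rewrite !hdist_sum; apply: eq_bigr => i _; rewrite eq_sym. Qed.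

Lemma hdist_add_parity x y z : odd (hdist x y + hdist y z) = odd (hdist x z).
Proof.
have -> : (hdist x y + hdist y z =
           hdist x z + 2 * \sum_i ((x i != y i) && (y i != z i)))%N.
  rewrite !hdist_sum big_distrr -!big_split /=; apply: eq_bigr => i _.
  by case: (x i); case: (y i); case: (z i).
by rewrite oddD oddM andFb addbF.
Qed.

End HammingDistance.

(* Values at w = 0, ..., 10: 504, 198, 55, 6, 0, 4, 3, 0, 16, 90, 279. *)
Definition delsarte_poly : seq int := [:: 504; -306; 163; -69; 18].

Lemma delsarte_poly_ge0 w : (w <= 10)%N -> 0 <= binpoly delsarte_poly w.
Proof.
rewrite /binpoly !big_ord_recl big_ord0.
by case: w => [|[|[|[|[|[|[|[|[|[|[|w]]]]]]]]]]] w_le; [vm_compute.. | exfalso; lia].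
Qed.

Lemma delsarte_poly_eq0 w :
  (0 < w <= 10)%N -> (binpoly delsarte_poly w == 0) = (w \in [:: 4; 7]%N).
Proof. by rewrite /binpoly !big_ord_recl big_ord0; do 11?case: w => [|w]. Qed.

Section Length10.

Variable C : seq (bword 10).
Hypothesis OA_C : is_binary_OA 10 112 4 C.

Local Notation mult x := (count_mem x C).

Lemma sumr_const_OA (a : int) : \sum_(y <- C) a = a *+ 112.
Proof. by rewrite big_const_seq count_predT iter_addr_0; case: OA_C => ->. Qed.

Lemma sum_delsarte_hdist x : \sum_(y <- C) binpoly delsarte_poly (hdist x y) = 1008.
Proof.
by rewrite /hdist (sum_binpoly_dist_on OA_C) // cardsT card_ord !big_ord_recl big_ord0.
Qed.

Lemma mult_delsarte x :
  (504 * mult x)%N%:R + \sum_(y <- C | y != x) binpoly delsarte_poly (hdist x y) = 1008.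
Proof.
rewrite -(sum_delsarte_hdist x) [RHS](bigID (pred1 x)) /=; congr (_ + _).
rewrite (eq_bigr (fun _ => 504)) => [|y /eqP ->]; last first.
  by rewrite hdistxx /binpoly !big_ord_recl big_ord0.
by rewrite natrM -sum1_count natr_sum mulr_sumr; apply: eq_bigr => y _; rewrite mulr1.
Qed.

Lemma delsarte_rest_ge0 x : 0 <= \sum_(y <- C | y != x) binpoly delsarte_poly (hdist x y).
Proof. by apply: sumr_ge0 => y _; rewrite delsarte_poly_ge0 ?hdist_le. Qed.

Lemma mult_le2 x : (mult x <= 2)%N.
Proof. by have := mult_delsarte x; have := delsarte_rest_ge0 x; lia. Qed.

Lemma mult_gt0 x : (0 < mult x)%N = (x \in C).
Proof. by rewrite -has_count has_pred1. Qed.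

Lemma mult2_hdist x y : mult x = 2%N -> y \in C -> hdist x y \in [:: 0; 4; 7]%N.
Proof.
move=> mult_x yC; have := mult_delsarte x; rewrite mult_x => /eqP.
rewrite -[1008]addr0 (inj_eq (addrI _)) psumr_eq0 => [/allP/(_ y yC)|z _]; last first.
  by rewrite delsarte_poly_ge0 ?hdist_le.
have [<- _|yx /=] := eqVneq y x; first by rewrite hdistxx.
rewrite delsarte_poly_eq0 ?hdist_le ?lt0n ?hdist_eq0 1?eq_sym ?yx // => hdist_47.
by rewrite inE hdist_47 orbT.
Qed.

Lemma hdist_agree_diff (x y z : bword 10) :
  agree [set i | x i != y i] y z -> hdist x z = (hdist x y + hdist y z)%N.
Proof.
move=> /forallP agree_z; rewrite !hdist_sum -big_split; apply: eq_bigr => i _ /=.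
by have := agree_z i; rewrite inE; case: (x i); case: (y i); case: (z i).
Qed.

(* The 7 rows agreeing with [y] on the 4 coordinates where [x] and [y]
   differ would all have to be equal to [y]. *)
Lemma doubled_hdist_neq4 x y : mult x = 2%N -> mult y = 2%N -> hdist x y != 4%N.
Proof.
move=> mult_x mult_y; apply/eqP => dist4; pose S := [set i | x i != y i].
have cardS : #|S| = 4%N by move: dist4; rewrite /hdist /dist_on setTI.
have := count_agree_strength OA_C y cardS.
rewrite -(@eq_in_count _ (predI (agree S y) (pred1 y))) => [|z zC].
  have : (count (predI (agree S y) (pred1 y)) C <= mult y)%N.
    by apply: sub_count => z /andP[].
  by move=> + count7; rewrite count7 mult_y.
apply/andP/idP => [[] // | agree_z]; split => //.
have := mult2_hdist mult_x zC; have := mult2_hdist mult_y zC.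
rewrite (hdist_agree_diff agree_z) dist4 !inE.
by case/or3P => [|/eqP-> //|/eqP-> //]; rewrite hdist_eq0 eq_sym.
Qed.

Lemma doubled_hdist x y : mult x = 2%N -> mult y = 2%N -> x != y -> hdist x y = 7%N.
Proof.
move=> mult_x mult_y xy; have := doubled_hdist_neq4 mult_x mult_y.
have := @mult2_hdist x y mult_x; rewrite -mult_gt0 mult_y => /(_ isT).
by rewrite !inE hdist_eq0 (negbTE xy) /= => /orP[/eqP-> | /eqP].
Qed.

(* Three doubled words would be pairwise at the odd distance 7, against parity. *)
Lemma card_doubled : (#|[set x | mult x == 2%N]| <= 2)%N.
Proof.
set D := [set x | _]; have [-> | [x xD]] := set_0Vmem D; first by rewrite cards0.
rewrite (cardsD1 x) xD add1n ltnS; apply/card_le1_eqP => y z.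
rewrite !inE => /andP[yx /eqP mult_y] /andP[zx /eqP mult_z].
move: xD; rewrite inE => /eqP mult_x.
apply/eqP/negPn/negP => yz; have := hdist_add_parity y x z.
by rewrite hdistC !doubled_hdist // eq_sym.
Qed.

Lemma sum_mult_sq_le : \sum_x (mult x)%:R ^+ 2 <= 116 :> int.
Proof.
have mult_sq x : (mult x)%:R ^+ 2 <= (mult x)%:R + 2 * (mult x == 2%N)%:R :> int.
  by have := mult_le2 x; case: (mult x) => [|[|[|]]].
apply: (le_trans (ler_sum _ (fun x _ => mult_sq x))).
rewrite big_split /= -(sum_count_mem C (fun _ => 1)) sumr_const_OA -mulr_sumr -natr_sum.
have -> : (\sum_x (mult x == 2%N) = #|[set x | mult x == 2%N]|)%N.
  by rewrite -sum1_card [RHS]big_mkcond; apply: eq_bigr => x _; rewrite inE.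
by have := card_doubled; lia.
Qed.

Local Notation walsh T := (\sum_(y <- C) walsh_char T y).

Lemma walsh_mult (T : {set 'I_10}) : \sum_x (mult x)%:R * walsh_char T x = walsh T.
Proof. by rewrite [RHS]sum_count_mem; apply: eq_bigr => x _; rewrite mulr_natl. Qed.

Lemma walsh_set0 : walsh set0 = 112.
Proof.
under eq_bigr do rewrite /walsh_char /dist_on set0I cards0 expr0.
exact: sumr_const_OA.
Qed.

Lemma walsh_mod32 (T : {set 'I_10}) :
  (32 %| walsh T - \sum_(y <- C) binpoly sign_poly (dist_on T (zero_word 10) y))%Z.
Proof. by rewrite -sumrB; apply: rpred_sum => y _; exact: sign_binpoly_mod32. Qed.

(* The moment sum of [sign_poly] is 112 * 'C(#|T| - 1, 4), an odd multiple
   of 16 exactly when 5 <= #|T| <= 8. *)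
Lemma walsh_sq_ge (T : {set 'I_10}) : (4 < #|T| < 9)%N -> 256 <= walsh T ^+ 2.
Proof.
move=> cardT; have [q /eqP] := dvdzP (walsh_mod32 T).
rewrite subr_eq (sum_binpoly_dist_on OA_C) // => /eqP ->.
have [t ->] : exists t : int,
    \sum_(j < size sign_poly)
       sign_poly`_j * ('C(#|T|, j) * (112 %/ 2 ^ 4 * 2 ^ (4 - j)))%:R
    = 16 * (2 * t + 1).
  rewrite !big_ord_recl big_ord0; case/andP: cardT.
  case: #|T| => [|[|[|[|[|[|[|[|[|k]]]]]]]]] // _ _.
  - by exists 3.
  - by exists 17.
  - by exists 52.
  - by exists 122.
nia.
Qed.

Definition walsh_lb (k : nat) : nat :=
  (if k == 0 then 112 ^ 2 else if 4 < k < 9 then 256 else 0)%N.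

Lemma walsh_sq_lb (T : {set 'I_10}) : (walsh_lb #|T|)%:R <= walsh T ^+ 2.
Proof.
rewrite /walsh_lb cards_eq0; have [-> | _] := eqVneq T set0.
  by rewrite walsh_set0 natrX.
by case: ifP => [/walsh_sq_ge // | _]; exact: sqr_ge0.
Qed.

Lemma sum_walsh_lb : \sum_(k < 11) walsh_lb k *+ 'C(10, k) = (1024 * 169)%N.
Proof. by rewrite !big_ord_recl big_ord0. Qed.

Lemma no_OA_10_112_4 : False.
Proof.
have := parseval (fun x => (mult x)%:R); under eq_bigr do rewrite walsh_mult.
have : \sum_(T : {set 'I_10}) (walsh_lb #|T|)%:R <= \sum_T walsh T ^+ 2.
  by apply: ler_sum => T _; exact: walsh_sq_lb.
rewrite -natr_sum sum_set_card sum_walsh_lb => lb_le walsh_eq; rewrite walsh_eq in lb_le.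
by have := ler_wpM2l (ler0n _ (2 ^ 10)) sum_mult_sq_le; move/(le_trans lb_le); lia.
Qed.

End Length10.

Theorem theorem4p3 :
  forall n : nat, (n = 10 \/ n = 11) ->
  ~ (exists C : seq (bword n), is_binary_OA n 112 4 C).
Proof.
move=> n [->|->] [C OA_C]; first exact: no_OA_10_112_4 OA_C.
exact: no_OA_10_112_4 (is_binary_OA_puncture OA_C).
Qed.
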